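(* Assume (H0)–(H2), (B1) and (B2) for the family of planar viscous shocks $\bar u^\varepsilon$ described in the context, and let $\lambda_*^\varepsilon(\tilde\xi)$ be the family of Evans-function roots with expansion $\lambda_*^\varepsilon(\tilde\xi)=i\tilde\xi\tau_*(\varepsilon)-\tilde\xi^2\beta(\varepsilon)+\delta(\varepsilon)\tilde\xi^3+r(\varepsilon,\tilde\xi)\tilde\xi^4$, $r\in C^1$. Then there is a unique $C^1$ function $\mathcal E$, defined for $\tilde\xi$ near $0$, with $\mathcal E(0)=0$, such that for $\varepsilon$ and $\tilde\xi\neq 0$ sufficiently small, $\mathrm{Re}\,\lambda_*^\varepsilon(\tilde\xi)=0$ if and only if $\varepsilon=\mathcal E(\tilde\xi)$. Moreover, in the generic case $\mathrm{Re}\,\delta(0)\ne0$, $$\mathcal E(\tilde\xi)\sim\frac{\mathrm{Re}\,\delta(0)}{\partial_\varepsilon\mathrm{Re}\,\beta(0)}\,\tilde\xi\quad\text{as }\tilde\xi\to0.$$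
   Context: Setting: a smooth family of systems $u_t=\Delta_xu-\sum_{j=1}^2F^j(\varepsilon,u)_{x_j}$, $u\in\mathbb R^n$, $x\in\mathbb R^2$, with standing planar viscous shocks $\bar u^\varepsilon(x_1)\to u_\pm(\varepsilon)$ solving $u'=F^1(\varepsilon,u)-F^1(\varepsilon,u_-)$; $A^j_\pm:=\partial_uF^j(\varepsilon,u_\pm)$. (H0): $F^j\in C^k$, $k\ge2$. (H1): $A^1_\pm$ have real distinct nonzero eigenvalues and $\xi_1A^1_\pm+\xi_2A^2_\pm$ is real-semisimple for $\xi\in\mathbb R^2$. (H2): $\bar u^\varepsilon$ is a transverse connecting orbit of the profile ODE, unique up to translation, with $\dim S(A^1_+)+\dim U(A^1_-)=n+1$ (so $A^1_-$ has $c-1$ negative, $A^1_+$ has $n-c$ positive eigenvalues). Lopatinski determinant: $\Delta^\varepsilon(\tilde\xi,\lambda):=\det(\mathcal R_1^-,\dots,\mathcal R_{c-1}^-,\mathcal R_{c+1}^+,\dots,\mathcal R_n^+,\lambda[u]+i\tilde\xi[F^2])$, where $[u]=u_+-u_-$, $[F^2]=F^2(\varepsilon,u_+)-F^2(\varepsilon,u_-)$, and $\{\mathcal R^+_i\}$, $\{\mathcal R^-_i\}$ are bases of the unstable subspace of $\mathcal A_+$, resp. the stable subspace of $\mathcal A_-$, with $\mathcal A_\pm(\tilde\xi,\lambda)=(\lambda I+i\tilde\xi A^2_\pm)(A^1_\pm)^{-1}$; it is homogeneous of degree one and analytic away from finitely many branch singularities. Evans function: $D(\tilde\xi,\lambda)$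 is the determinant, at $x_1=0$, of bases of solutions decaying at $-\infty$ and at $+\infty$ of the first-order form of the eigenvalue ODE $w''-(A^1(x_1)w)'-i\tilde\xi A^2(x_1)w-\tilde\xi^2w=\lambda w$, $A^j(x_1)=\partial_uF^j(\varepsilon,\bar u^\varepsilon(x_1))$, chosen analytically in $\lambda$; its zeros with $\mathrm{Re}\,\lambda\ge0$ are the eigenvalues of the linearized operator on the Fourier mode $e^{i\tilde\xi x_2}$. In polar coordinates $D(\rho\tilde\xi_0,\rho\lambda_0)$ it satisfies $D|_{\rho=0}=0$, $\partial_\rho D|_{\rho=0}=\gamma\Delta(\tilde\xi_0,\lambda_0)$ ($\gamma\ne0$ a transversality constant). (B1): for $\varepsilon$ small, $\Delta^\varepsilon(1,\lambda)$ has no roots with $\mathrm{Re}\,\lambda\ge0$ except a single simple purely imaginary root $\lambda=i\tau_*(\varepsilon)\ne0$, lying away from the singularities of $\Delta^\varepsilon$. Refined stability coefficient: $\beta(\varepsilon):=-D_{\rho\rho}/D_{\rho\lambda}|_{\rho=0}$ evaluated at $(\tilde\xi_0,\lambda_0)=(1,i\tau_*(\varepsilon))$. (B2): $\mathrm{Re}\,\beta(0)=0$ and $\partial_\varepsilon\mathrm{Re}\,\beta(0)<0$. Known fact (used as given): under (H0)–(H2) and (B1), for $\varepsilon,\tilde\xi$ small there is a smooth family of roots $(\tilde\xi,\lambda_*^\varepsilon(\tilde\xi))$ of $D$ with $\lambda_*^\varepsilon(\tilde\xi)=i\tilde\xi\tau_*(\varepsilon)-\tilde\xi^2\beta(\varepsilon)+\delta(\varepsilon)\tilde\xi^3+r(\varepsilon,\tilde\xi)\tilde\xi^4$,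 $r\in C^1$; this defines $\delta(\varepsilon)$. *)

From Stdlib Require Import Reals.
From Coquelicot Require Export Coquelicot.
Open Scope R_scope.

Definition C1_near (f : R -> R) (x0 : R) : Prop :=
  exists eta : R, 0 < eta /\
    forall x, Rabs (x - x0) < eta -> ex_derive f x /\ continuous (Derive f) x.

Definition C1c_near (g : R -> C) (x0 : R) : Prop :=
  C1_near (fun x => Re (g x)) x0 /\ C1_near (fun x => Im (g x)) x0.

Definition C1_2d_near (f : R -> R -> R) (x0 y0 : R) : Prop :=
  exists eta : R, 0 < eta /\
    forall x y, Rabs (x - x0) < eta -> Rabs (y - y0) < eta ->
      ex_derive (fun t => f t y) x /\ ex_derive (fun t => f x t) y /\
      continuity_2d_pt (fun a b => Derive (fun t => f t b) a) x y /\
      continuity_2d_pt (fun a b => Derive (fun t => f a t) b) x y.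

Definition C1c_2d_near (g : R -> R -> C) (x0 y0 : R) : Prop :=
  C1_2d_near (fun a b => Re (g a b)) x0 y0 /\
  C1_2d_near (fun a b => Im (g a b)) x0 y0.

Definition expansion (tau : R -> R) (beta delta : R -> C) (r : R -> R -> C)
  (eps xi : R) : C :=
  Cplus (Cplus (Cplus (Cmult Ci (RtoC (xi * tau eps)))
                      (Copp (Cmult (RtoC (xi ^ 2)) (beta eps))))
               (Cmult (delta eps) (RtoC (xi ^ 3))))
        (Cmult (r eps xi) (RtoC (xi ^ 4))).

Definition zero_locus_graph (lam : R -> R -> C) (E : R -> R) : Prop :=
  exists e0 x0 : R, 0 < e0 /\ 0 < x0 /\
    forall eps xi, Rabs eps < e0 -> 0 < Rabs xi < x0 ->
      (Re (lam eps xi) = 0 <-> eps = E xi).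

Definition curve_spec (lam : R -> R -> C) (E : R -> R) : Prop :=
  C1_near E 0 /\ E 0 = 0 /\ zero_locus_graph lam E.

(* Writing G(e, x) = - Re beta(e) + x Re delta(e) + x^2 Re r(e, x), the expansion gives
   Re lambda(e, x) = x^2 G(e, x), so for x <> 0 the zero set of Re lambda is that of G.
   By (B2), G(0, 0) = 0 and dG/de (0, 0) = - d Re beta/de (0) > 0, so the implicit function
   theorem yields a C^1 curve e = E(x) with E(0) = 0 and
   E'(0) = - (dG/dx) / (dG/de) (0, 0) = Re delta(0) / (d Re beta/de)(0), which is the stated
   asymptotics. Any other curve with the same properties is continuous at 0, hence stays
   in the neighbourhood where the zero set of G is a graph, and so coincides with E. *)

From Stdlib Require Import Reals Lra IndefiniteDescription.
From Coquelicot Require Import Coquelicot.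
Open Scope R_scope.

Lemma Rmin3_pos a b c : 0 < a -> 0 < b -> 0 < c ->
  exists d, 0 < d /\ d <= a /\ d <= b /\ d <= c.
Proof.
  intros Ha Hb Hc. exists (Rmin a (Rmin b c)).
  pose proof (Rmin_l a (Rmin b c)); pose proof (Rmin_r a (Rmin b c)).
  pose proof (Rmin_l b c); pose proof (Rmin_r b c).
  repeat split; try lra. repeat apply Rmin_glb_lt; lra.
Qed.

Lemma Rmin2_pos a b : 0 < a -> 0 < b -> exists d, 0 < d /\ d <= a /\ d <= b.
Proof.
  intros Ha Hb. destruct (Rmin3_pos a b 1 Ha Hb Rlt_0_1) as (d & ? & ? & ? & _). now exists d.
Qed.

Lemma continuity_pt_of_is_derive f x l : is_derive f x l -> continuity_pt f x.
Proof.
  intros H. apply continuity_pt_filterlim, (ex_derive_continuous f x). now exists l.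
Qed.

Lemma continuity_pt_eps f x : continuity_pt f x -> forall eps, 0 < eps ->
  exists del, 0 < del /\ forall y, Rabs (y - x) < del -> Rabs (f y - f x) < eps.
Proof.
  intros H eps He; destruct (H eps He) as [del [Hd Hy]]; exists del; split; auto.
  intros y Hy'. destruct (Req_dec y x) as [->|Hne].
  - unfold Rminus; rewrite Rplus_opp_r, Rabs_R0; auto.
  - apply (Hy y); repeat split; auto.
Qed.

Lemma continuity_pt_of_eps f x : (forall eps, 0 < eps ->
  exists del, 0 < del /\ forall y, Rabs (y - x) < del -> Rabs (f y - f x) < eps) ->
  continuity_pt f x.
Proof.
  intros H eps He; destruct (H eps He) as [del [Hd Hy]]; exists del; split; auto.
  intros y [_ Hy']; apply Hy, Hy'.
Qed.

Lemma continuity_2d_pt_eps f x y : continuity_2d_pt f x y -> forall eps, 0 < eps ->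
  exists del, 0 < del /\ forall u v, Rabs (u - x) < del -> Rabs (v - y) < del ->
    Rabs (f u v - f x y) < eps.
Proof.
  intros H eps He. destruct (H (mkposreal eps He)) as [d Hd].
  exists d; split; [apply cond_pos | auto].
Qed.

Lemma Rdiv_near A0 B0 eps : B0 <> 0 -> 0 < eps -> exists del, 0 < del /\
  forall A B, Rabs (A - A0) < del -> Rabs (B - B0) < del -> Rabs (A / B - A0 / B0) < eps.
Proof.
  intros HB0. apply (continuity_2d_pt_eps (fun A B => A * / B)).
  apply continuity_2d_pt_mult; [apply continuity_2d_pt_id1|].
  apply continuity_2d_pt_inv; [apply continuity_2d_pt_id2 | exact HB0].
Qed.

Lemma Rabs_between p q c : Rmin p q <= c <= Rmax p q -> Rabs (c - p) <= Rabs (q - p).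
Proof.
  unfold Rmin, Rmax; destruct (Rle_dec p q); intros [H1 H2];
  unfold Rabs; repeat destruct Rcase_abs; lra.
Qed.

Lemma Rabs_between_lt p q c B : Rabs p < B -> Rabs q < B -> Rmin p q <= c <= Rmax p q ->
  Rabs c < B.
Proof.
  unfold Rmin, Rmax; destruct (Rle_dec p q); intros H1 H2 [H3 H4];
  unfold Rabs in *; repeat destruct Rcase_abs; lra.
Qed.

Lemma MVT_segment (g dg : R -> R) p q :
  (forall t, Rmin p q <= t <= Rmax p q -> is_derive g t (dg t)) ->
  exists c, Rmin p q <= c <= Rmax p q /\ g q - g p = dg c * (q - p).
Proof.
  intros H. apply (MVT_gen g p q dg).
  - intros t Ht; apply H; lra.
  - intros t Ht; apply (continuity_pt_of_is_derive g t (dg t)), H, Ht.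
Qed.

Lemma locally_2d_of_box (P : R -> R -> Prop) eta x y :
  (forall u v, Rabs u < eta -> Rabs v < eta -> P u v) ->
  Rabs x < eta -> Rabs y < eta -> locally_2d P x y.
Proof.
  intros HP Hx Hy.
  destruct (Rmin2_pos (eta - Rabs x) (eta - Rabs y)) as (d & Hd & Hdx & Hdy); [lra.. |].
  exists (mkposreal d Hd); simpl; intros u v Hu Hv.
  pose proof (Rabs_triang_inv u x); pose proof (Rabs_triang_inv v y).
  apply HP; lra.
Qed.

Lemma continuity_2d_pt_of_partials (f f1 : R -> R -> R) x y :
  locally_2d (fun u v => is_derive (fun t => f t v) u (f1 u v)) x y ->
  continuity_2d_pt f1 x y -> continuity_pt (fun t => f x t) y ->
  continuity_2d_pt f x y.
Proof.
  intros Hder Hf1 Hfx eps.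
  set (M := Rabs (f1 x y) + 1).
  assert (HM : 0 < M) by (pose proof (Rabs_pos (f1 x y)); unfold M; lra).
  assert (Heps2 : 0 < eps / 2) by (pose proof (cond_pos eps); lra).
  assert (HepsM : 0 < eps / (2 * M)) by (apply Rdiv_lt_0_compat; [apply cond_pos | lra]).
  assert (Hfx2 : continuity_2d_pt (fun _ v => f x v) x y).
  { apply (continuity_1d_2d_pt_comp (fun t => f x t) (fun _ v => v));
      [exact Hfx | apply continuity_2d_pt_id2]. }
  destruct (locally_2d_and _ _ x y Hder
             (locally_2d_and _ _ x y (Hf1 (mkposreal 1 Rlt_0_1))
               (locally_2d_and _ _ x y (Hfx2 (mkposreal _ Heps2))
                  (continuity_2d_pt_id1 x y (mkposreal _ HepsM)))))
    as [d Hbox].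
  exists d; intros u v Hu Hv; simpl in Hbox.
  destruct (MVT_segment (fun t => f t v) (fun t => f1 t v) x u) as [c [Hc Hmvt]].
  { intros t Ht. pose proof (Rabs_between _ _ _ Ht). apply Hbox; lra. }
  pose proof (Rabs_between _ _ _ Hc).
  destruct (Hbox c v) as (_ & Hf1c & _); [lra | exact Hv|].
  destruct (Hbox u v Hu Hv) as (_ & _ & Hfxv & Hux).
  simpl in Hmvt.
  replace (f u v - f x y) with (f1 c v * (u - x) + (f x v - f x y)) by lra.
  assert (Hprod : Rabs (f1 c v * (u - x)) <= eps / 2).
  { rewrite Rabs_mult.
    assert (Rabs (f1 c v) <= M) by (pose proof (Rabs_triang_inv (f1 c v) (f1 x y)); unfold M; lra).
    replace (eps / 2) with (M * (eps / (2 * M))) by (field; lra).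
    apply Rmult_le_compat; try apply Rabs_pos; lra. }
  pose proof (Rabs_triang (f1 c v * (u - x)) (f x v - f x y)). lra.
Qed.

Section ImplicitFunction.

Variables (G Ge Gx : R -> R -> R) (B k : R).
Hypothesis Hk : 0 < k.
Hypothesis HG : forall e x, Rabs e < B -> Rabs x < B ->
  is_derive (fun t => G t x) e (Ge e x) /\ is_derive (fun t => G e t) x (Gx e x) /\
  continuity_2d_pt Ge e x /\ continuity_2d_pt Gx e x.
Hypothesis HGe : forall e x, Rabs e < B -> Rabs x < B -> k < Ge e x.

Lemma G_increasing x p q : Rabs x < B -> Rabs p < B -> Rabs q < B -> p <= q ->
  k * (q - p) <= G q x - G p x.
Proof.
  intros Hx Hp Hq Hpq.
  destruct (MVT_segment (fun t => G t x) (fun t => Ge t x) p q) as [c [Hc Hmvt]].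
  { intros t Ht. apply HG; [apply (Rabs_between_lt p q) |]; auto. }
  simpl in Hmvt; rewrite Hmvt.
  assert (k < Ge c x) by (apply HGe; [apply (Rabs_between_lt p q) |]; auto).
  nra.
Qed.

Lemma G_root_unique x p q : Rabs x < B -> Rabs p < B -> Rabs q < B ->
  G p x = 0 -> G q x = 0 -> p = q.
Proof.
  intros Hx Hp Hq Gp Gq.
  destruct (Rtotal_order p q) as [Hlt | [Heq | Hgt]]; auto.
  - pose proof (G_increasing x p q Hx Hp Hq ltac:(lra)). nra.
  - pose proof (G_increasing x q p Hx Hq Hp ltac:(lra)). nra.
Qed.

(* A root [e] of [G . x] is bracketed by a sign change of size [k h] at [e +- h];
   by continuity in the second variable the sign change, hence a root, persists. *)
Lemma G_root_persists x e h : Rabs x < B -> 0 < h -> Rabs e + h < B -> G e x = 0 ->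
  exists d, 0 < d /\ forall y, Rabs (y - x) < d ->
    exists z, Rabs (z - e) < h /\ G z y = 0.
Proof.
  intros Hx Hh Heh Ge0.
  assert (He : Rabs e < B) by lra.
  assert (Hbox : forall t, e - h <= t <= e + h -> Rabs t < B).
  { intros t Ht. pose proof (Rle_abs e); pose proof (Rabs_maj2 e). apply Rabs_def1; lra. }
  assert (Hhi : k * h <= G (e + h) x).
  { pose proof (G_increasing x e (e + h) Hx He (Hbox (e + h) ltac:(lra)) ltac:(lra)). lra. }
  assert (Hlo : G (e - h) x <= - (k * h)).
  { pose proof (G_increasing x (e - h) e Hx (Hbox (e - h) ltac:(lra)) He ltac:(lra)). lra. }
  assert (Hkh : 0 < k * h) by nra.
  destruct (HG (e + h) x (Hbox (e + h) ltac:(lra)) Hx) as (_ & Dhi & _).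
  destruct (HG (e - h) x (Hbox (e - h) ltac:(lra)) Hx) as (_ & Dlo & _).
  destruct (continuity_pt_eps _ _ (continuity_pt_of_is_derive _ _ _ Dhi) _ Hkh) as [d1 [Hd1 Chi]].
  destruct (continuity_pt_eps _ _ (continuity_pt_of_is_derive _ _ _ Dlo) _ Hkh) as [d2 [Hd2 Clo]].
  destruct (Rmin3_pos d1 d2 (B - Rabs x)) as (d & Hd & Hdd1 & Hdd2 & HdB); [lra.. |].
  exists d; split; [exact Hd|]; intros y Hy.
  assert (HyB : Rabs y < B) by (pose proof (Rabs_triang_inv y x); lra).
  assert (Gy_hi : 0 < G (e + h) y) by (specialize (Chi y ltac:(lra)); apply Rabs_def2 in Chi; lra).
  assert (Gy_lo : G (e - h) y < 0) by (specialize (Clo y ltac:(lra)); apply Rabs_def2 in Clo; lra).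
  destruct (Ranalysis5.IVT_interv (fun t => G t y) (e - h) (e + h)) as [z [Hz Gz]];
    [| lra | exact Gy_lo | exact Gy_hi |].
  { intros t Ht. destruct (HG t y (Hbox t Ht) HyB) as (Dt & _).
    exact (continuity_pt_of_is_derive _ _ _ Dt). }
  exists z; split; [| exact Gz].
  assert (z <> e + h) by (intros ->; lra). assert (z <> e - h) by (intros ->; lra).
  apply Rabs_def1; lra.
Qed.

Hypothesis HB : 0 < B.
Hypothesis G00 : G 0 0 = 0.

Lemma root_curve_exists : exists (E : R -> R) x0, 0 < x0 /\ x0 <= B /\
  forall x, Rabs x < x0 -> Rabs (E x) < B / 2 /\ G (E x) x = 0.
Proof.
  destruct (G_root_persists 0 0 (B / 2)) as [d [Hd Hroot]];
    [rewrite Rabs_R0; lra | lra | rewrite Rabs_R0; lra | exact G00 |].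
  destruct (Rmin2_pos d B) as (x0 & Hx0 & Hx0d & Hx0B); [lra.. |].
  assert (Hex : forall x, exists e, Rabs x < x0 -> Rabs e < B / 2 /\ G e x = 0).
  { intros x. destruct (Rlt_le_dec (Rabs x) x0) as [Hx | Hx]; [| exists 0; lra].
    destruct (Hroot x) as [z [Hz Gz]].
    - rewrite Rminus_0_r; lra.
    - exists z; rewrite Rminus_0_r in Hz; auto. }
  destruct (functional_choice _ Hex) as [E HE].
  exists E, x0; auto.
Qed.

Section RootCurve.

Variables (E : R -> R) (x0 : R).
Hypothesis Hx0B : x0 <= B.
Hypothesis HE : forall x, Rabs x < x0 -> Rabs (E x) < B / 2 /\ G (E x) x = 0.

Lemma root_curve_graph e x : Rabs e < B -> Rabs x < x0 -> (G e x = 0 <-> e = E x).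
Proof.
  intros He Hx; destruct (HE x Hx) as [HEx GEx]; split.
  - intros Gex; apply (G_root_unique x); auto; lra.
  - intros ->; exact GEx.
Qed.

Lemma root_curve_at_0 : 0 < x0 -> E 0 = 0.
Proof.
  intros Hx0; symmetry; apply (root_curve_graph 0 0); rewrite ?Rabs_R0; auto.
Qed.

Lemma root_curve_continuous x : Rabs x < x0 -> forall eps, 0 < eps ->
  exists d, 0 < d /\ forall y, Rabs (y - x) < d -> Rabs y < x0 /\ Rabs (E y - E x) < eps.
Proof.
  intros Hx eps Heps; destruct (HE x Hx) as [HEx GEx].
  destruct (Rmin2_pos eps (B / 2)) as (h & Hh & Hh_eps & Hh_B); [lra.. |].
  destruct (G_root_persists x (E x) h) as [d1 [Hd1 Hroot]]; [lra.. | exact GEx |].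
  destruct (Rmin2_pos d1 (x0 - Rabs x)) as (d & Hd & Hdd1 & Hdx); [lra.. |].
  exists d; split; [exact Hd |]; intros y Hy.
  assert (Hy0 : Rabs y < x0) by (pose proof (Rabs_triang_inv y x); lra).
  split; [exact Hy0 |].
  destruct (Hroot y ltac:(lra)) as [z [Hz Gz]].
  assert (Hzy : z = E y).
  { apply root_curve_graph; [| exact Hy0 | exact Gz].
    pose proof (Rabs_triang_inv z (E x)); lra. }
  rewrite <- Hzy; lra.
Qed.

(* The difference quotients of [E] and the values of [Derive E] near [x] are both of
   the form [- Gx u v / Ge w z] at points squeezed between [(E x, x)] and [(E y, y)]. *)
Lemma implicit_slope_near x : Rabs x < x0 -> forall eps, 0 < eps ->
  exists d, 0 < d /\ forall y, Rabs (y - x) < d -> Rabs y < x0 /\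
    forall u v w z, Rabs (u - E x) <= Rabs (E y - E x) -> Rabs (v - x) <= Rabs (y - x) ->
      Rabs (w - E x) <= Rabs (E y - E x) -> Rabs (z - x) <= Rabs (y - x) ->
      Rabs (Gx u v / Ge w z - Gx (E x) x / Ge (E x) x) < eps.
Proof.
  intros Hx eps Heps; destruct (HE x Hx) as [HEx _].
  assert (HB0 : k < Ge (E x) x) by (apply HGe; lra).
  destruct (Rdiv_near (Gx (E x) x) (Ge (E x) x) eps ltac:(lra) Heps) as [dd [Hdd Hdiv]].
  destruct (HG (E x) x ltac:(lra) ltac:(lra)) as (_ & _ & CGe & CGx).
  destruct (continuity_2d_pt_eps _ _ _ CGx dd Hdd) as [d1 [Hd1 Hnum]].
  destruct (continuity_2d_pt_eps _ _ _ CGe dd Hdd) as [d2 [Hd2 Hden]].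
  destruct (Rmin2_pos d1 d2) as (d12 & Hd12 & H1 & H2); [lra.. |].
  destruct (root_curve_continuous x Hx d12 Hd12) as [d3 [Hd3 HEc]].
  destruct (Rmin3_pos d1 d2 d3) as (d & Hd & Hdd1 & Hdd2 & Hdd3); [lra.. |].
  exists d; split; [exact Hd |]; intros y Hy.
  destruct (HEc y ltac:(lra)) as [Hy0 HEy].
  split; [exact Hy0 |]; intros u v w z Hu Hv Hw Hz.
  apply Hdiv; [apply Hnum | apply Hden]; lra.
Qed.

Lemma root_curve_is_derive x : Rabs x < x0 -> is_derive E x (- Gx (E x) x / Ge (E x) x).
Proof.
  intros Hx; apply is_derive_Reals; intros eps Heps.
  destruct (implicit_slope_near x Hx eps Heps) as [d [Hd Hslope]].
  exists (mkposreal d Hd); intros h Hh0 Hh; simpl in Hh.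
  set (y := x + h).
  assert (Hyx : y - x = h) by (unfold y; ring).
  destruct (Hslope y ltac:(rewrite Hyx; exact Hh)) as [Hy0 Hquot].
  destruct (HE x Hx) as [HEx GEx]; destruct (HE y Hy0) as [HEy GEy].
  assert (HxB : Rabs x < B) by lra; assert (HyB : Rabs y < B) by lra.
  destruct (MVT_segment (fun t => G t y) (fun t => Ge t y) (E x) (E y)) as [c1 [Hc1 Mvt1]].
  { intros t Ht; apply HG; [apply (Rabs_between_lt (E x) (E y)) |]; auto; lra. }
  destruct (MVT_segment (fun t => G (E x) t) (fun t => Gx (E x) t) x y) as [c2 [Hc2 Mvt2]].
  { intros t Ht; apply HG; [| apply (Rabs_between_lt x y)]; auto; lra. }
  simpl in Mvt1, Mvt2.
  assert (Hc1B : k < Ge c1 y) by (apply HGe; [apply (Rabs_between_lt (E x) (E y)) |]; auto; lra).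
  assert (Hquot_eq : (E y - E x) / h = - Gx (E x) c2 / Ge c1 y).
  { rewrite Hyx in Mvt2. field_simplify_eq; [nra | split; [lra | exact Hh0]]. }
  rewrite Hquot_eq.
  replace (- Gx (E x) c2 / Ge c1 y - - Gx (E x) x / Ge (E x) x)
    with (- (Gx (E x) c2 / Ge c1 y - Gx (E x) x / Ge (E x) x)) by (unfold Rdiv; ring).
  rewrite Rabs_Ropp; apply Hquot.
  - unfold Rminus; rewrite Rplus_opp_r, Rabs_R0; apply Rabs_pos.
  - exact (Rabs_between _ _ _ Hc2).
  - exact (Rabs_between _ _ _ Hc1).
  - lra.
Qed.

Lemma root_curve_Derive_continuous x : Rabs x < x0 -> continuous (Derive E) x.
Proof.
  intros Hx; apply continuity_pt_filterlim, continuity_pt_of_eps; intros eps Heps.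
  destruct (implicit_slope_near x Hx eps Heps) as [d [Hd Hslope]].
  exists d; split; [exact Hd |]; intros y Hy.
  destruct (Hslope y Hy) as [Hy0 Hquot].
  rewrite (is_derive_unique _ _ _ (root_curve_is_derive y Hy0)),
    (is_derive_unique _ _ _ (root_curve_is_derive x Hx)).
  replace (- Gx (E y) y / Ge (E y) y - - Gx (E x) x / Ge (E x) x)
    with (- (Gx (E y) y / Ge (E y) y - Gx (E x) x / Ge (E x) x)) by (unfold Rdiv; ring).
  rewrite Rabs_Ropp; apply Hquot; lra.
Qed.

End RootCurve.

End ImplicitFunction.

Lemma implicit_function (G Ge Gx : R -> R -> R) eta : 0 < eta ->
  (forall e x, Rabs e < eta -> Rabs x < eta ->
    is_derive (fun t => G t x) e (Ge e x) /\ is_derive (fun t => G e t) x (Gx e x) /\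
    continuity_2d_pt Ge e x /\ continuity_2d_pt Gx e x) ->
  G 0 0 = 0 -> 0 < Ge 0 0 ->
  exists E a x0, 0 < a /\ 0 < x0 /\ E 0 = 0 /\
    (forall e x, Rabs e < a -> Rabs x < x0 -> (G e x = 0 <-> e = E x)) /\
    (forall x, Rabs x < x0 ->
       is_derive E x (- Gx (E x) x / Ge (E x) x) /\ continuous (Derive E) x).
Proof.
  intros Heta HG G00 Ge00.
  set (k := Ge 0 0 / 2).
  assert (Hk : 0 < k) by (unfold k; lra).
  destruct (HG 0 0) as (_ & _ & CGe & _); rewrite ?Rabs_R0; [lra.. |].
  destruct (continuity_2d_pt_eps _ _ _ CGe k Hk) as [d [Hd HGe_near]].
  destruct (Rmin2_pos d eta) as (B & HB & HBd & HBeta); [lra.. |].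
  assert (HGB : forall e x, Rabs e < B -> Rabs x < B ->
    is_derive (fun t => G t x) e (Ge e x) /\ is_derive (fun t => G e t) x (Gx e x) /\
    continuity_2d_pt Ge e x /\ continuity_2d_pt Gx e x).
  { intros e x He Hx; apply HG; lra. }
  assert (HGe : forall e x, Rabs e < B -> Rabs x < B -> k < Ge e x).
  { intros e x He Hx. specialize (HGe_near e x). rewrite !Rminus_0_r in HGe_near.
    assert (Hnear : Rabs (Ge e x - Ge 0 0) < k) by (apply HGe_near; lra).
    apply Rabs_def2 in Hnear; unfold k in *; lra. }
  destruct (root_curve_exists G Ge Gx B k Hk HGB HGe HB G00) as (E & x0 & Hx0 & Hx0B & HE).
  exists E, B, x0; split; [exact HB |]; split; [exact Hx0 |]; split;
    [exact (root_curve_at_0 G Ge Gx B k Hk HGB HGe HB G00 E x0 Hx0B HE Hx0) |]; split.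
  - intros e x He Hx; exact (root_curve_graph G Ge Gx B k Hk HGB HGe HB E x0 Hx0B HE e x He Hx).
  - intros x Hx; split.
    + exact (root_curve_is_derive G Ge Gx B k Hk HGB HGe HB E x0 Hx0B HE x Hx).
    + exact (root_curve_Derive_continuous G Ge Gx B k Hk HGB HGe HB E x0 Hx0B HE x Hx).
Qed.

Definition reduced (b d : R -> R) (rho : R -> R -> R) (e x : R) : R :=
  - b e + x * d e + x ^ 2 * rho e x.

Definition reduced_de (b d : R -> R) (rho : R -> R -> R) (e x : R) : R :=
  - Derive b e + x * Derive d e + x ^ 2 * Derive (fun t => rho t x) e.

Definition reduced_dx (d : R -> R) (rho : R -> R -> R) (e x : R) : R :=
  d e + 2 * x * rho e x + x ^ 2 * Derive (fun t => rho e t) x.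

Lemma Re_expansion tau beta delta r eps xi :
  Re (expansion tau beta delta r eps xi) =
  xi ^ 2 * reduced (fun e => Re (beta e)) (fun e => Re (delta e)) (fun u v => Re (r u v)) eps xi.
Proof.
  unfold expansion, reduced. destruct (beta eps), (delta eps), (r eps xi).
  unfold Cplus, Cmult, Copp, Ci, RtoC, Re; simpl; ring.
Qed.

Lemma continuity_2d_pt_lift1 f x y : continuity_pt f x -> continuity_2d_pt (fun u _ => f u) x y.
Proof.
  intros Hf. apply (continuity_1d_2d_pt_comp f (fun u _ => u)); [exact Hf | apply continuity_2d_pt_id1].
Qed.

Lemma reduced_C1 b d rho : C1_near b 0 -> C1_near d 0 -> C1_2d_near rho 0 0 ->
  exists eta, 0 < eta /\ forall e x, Rabs e < eta -> Rabs x < eta ->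
    is_derive (fun t => reduced b d rho t x) e (reduced_de b d rho e x) /\
    is_derive (fun t => reduced b d rho e t) x (reduced_dx d rho e x) /\
    continuity_2d_pt (reduced_de b d rho) e x /\ continuity_2d_pt (reduced_dx d rho) e x.
Proof.
  intros [eb [Heb Hb]] [ed [Hed Hd]] [er [Her Hr]].
  destruct (Rmin3_pos eb ed er) as (eta & Heta & Hetab & Hetad & Hetar); [lra.. |].
  assert (Hrho : forall u v, Rabs u < er -> Rabs v < er ->
    is_derive (fun t => rho t v) u (Derive (fun t => rho t v) u) /\
    is_derive (fun t => rho u t) v (Derive (fun t => rho u t) v) /\
    continuity_2d_pt (fun a c => Derive (fun t => rho t c) a) u v /\
    continuity_2d_pt (fun a c => Derive (fun t => rho a t) c) u v).
  { intros u v Hu Hv. destruct (Hr u v) as (H1 & H2 & H3 & H4); rewrite ?Rminus_0_r; auto.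
    repeat split; auto; apply Derive_correct; auto. }
  exists eta; split; [exact Heta |]; intros e x He Hx.
  destruct (Hb e) as [Db Cb]; [rewrite Rminus_0_r; lra |].
  destruct (Hd e) as [Dd Cd]; [rewrite Rminus_0_r; lra |].
  destruct (Hrho e x) as (Dr1 & Dr2 & Cr1 & Cr2); [lra.. |].
  assert (Crho : continuity_2d_pt rho e x).
  { apply continuity_2d_pt_of_partials with (f1 := fun a c => Derive (fun t => rho t c) a).
    - apply (locally_2d_of_box _ er); [intros u v Hu Hv; apply Hrho | ..]; auto; lra.
    - exact Cr1.
    - exact (continuity_pt_of_is_derive _ _ _ Dr2). }
  assert (Cd0 : continuity_pt d e) by apply continuity_pt_filterlim, (ex_derive_continuous d e), Dd.
  apply continuity_pt_filterlim in Cb, Cd.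
  split; [| split; [| split]].
  - unfold reduced, reduced_de. auto_derive; [repeat split; auto; eexists; exact Dr1 |].
    change (fun t => b t) with b; change (fun t => d t) with d; ring.
  - unfold reduced, reduced_dx. auto_derive; [eexists; exact Dr2 | ring].
  - unfold reduced_de.
    repeat first [ apply continuity_2d_pt_plus | apply continuity_2d_pt_mult
                 | apply continuity_2d_pt_opp | apply continuity_2d_pt_id2
                 | apply continuity_2d_pt_const | apply continuity_2d_pt_lift1 | assumption ].
  - unfold reduced_dx.
    repeat first [ apply continuity_2d_pt_plus | apply continuity_2d_pt_mult
                 | apply continuity_2d_pt_id2 | apply continuity_2d_pt_const
                 | apply continuity_2d_pt_lift1 | assumption ].
Qed.

Lemma reduced_slope_at_0 b d rho : Derive b 0 <> 0 ->
  - reduced_dx d rho 0 0 / reduced_de b d rho 0 0 = d 0 / Derive b 0.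
Proof.
  intros Hb. unfold reduced_dx, reduced_de. field; lra.
Qed.

Lemma zero_locus_graph_of_factor lam (G : R -> R -> R) E el a x0 :
  0 < el -> 0 < a -> 0 < x0 ->
  (forall e x, Rabs e < a -> Rabs x < x0 -> (G e x = 0 <-> e = E x)) ->
  (forall eps xi, Rabs eps < el -> Rabs xi < el -> Re (lam eps xi) = xi ^ 2 * G eps xi) ->
  zero_locus_graph lam E.
Proof.
  intros Hel Ha Hx0 Hgraph Hfactor.
  destruct (Rmin2_pos el a) as (e0 & He0 & He0l & He0a); [lra.. |].
  destruct (Rmin2_pos el x0) as (xi0 & Hxi0 & Hxi0l & Hxi0x); [lra.. |].
  exists e0, xi0; split; [exact He0 |]; split; [exact Hxi0 |].
  intros eps xi Heps [Hxi_pos Hxi].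
  rewrite Hfactor, <- Hgraph by lra.
  assert (Hxi2 : xi ^ 2 <> 0) by (apply pow_nonzero; intros ->; rewrite Rabs_R0 in Hxi_pos; lra).
  split; intros H.
  - destruct (Rmult_integral _ _ H); [contradiction | assumption].
  - rewrite H; ring.
Qed.

Lemma curve_spec_unique lam E E' : curve_spec lam E -> curve_spec lam E' ->
  exists eta, 0 < eta /\ forall xi, Rabs xi < eta -> E' xi = E xi.
Proof.
  intros [_ [E0 [e0 [x0 [He0 [Hx0 HZ]]]]]] [[h' [Hh' HC']] [E'0 [e0' [x0' [He0' [Hx0' HZ']]]]]].
  destruct (HC' 0) as [D'0 _]; [rewrite Rminus_0_r, Rabs_R0; lra |].
  assert (CE' : continuity_pt E' 0) by apply continuity_pt_filterlim, (ex_derive_continuous E' 0), D'0.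
  destruct (Rmin2_pos e0 e0') as (m & Hm & Hme0 & Hme0'); [lra.. |].
  destruct (continuity_pt_eps _ _ CE' m Hm) as [del [Hdel Hnear]].
  destruct (Rmin3_pos del x0 x0') as (eta & Heta & Hdel' & Hx0e & Hx0e'); [lra.. |].
  exists eta; split; [exact Heta |]; intros xi Hxi.
  destruct (Req_dec xi 0) as [-> | Hxi0]; [congruence |].
  assert (HE'xi : Rabs (E' xi) < m).
  { specialize (Hnear xi ltac:(rewrite Rminus_0_r; lra)). rewrite E'0, !Rminus_0_r in Hnear. exact Hnear. }
  assert (Hxi_pos : 0 < Rabs xi) by (apply Rabs_pos_lt, Hxi0).
  apply HZ; [lra | lra |].
  apply (HZ' (E' xi) xi); [lra | lra | reflexivity].
Qed.

Lemma lim_ratio_of_is_derive E c : E 0 = 0 -> c <> 0 -> is_derive E 0 c ->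
  is_lim (fun xi => E xi / (c * xi)) 0 1.
Proof.
  intros E0 Hc HdE. apply is_derive_Reals in HdE.
  apply is_lim_spec; intros eps.
  assert (Hec : 0 < eps * Rabs c) by (apply Rmult_lt_0_compat; [apply cond_pos | apply Rabs_pos_lt, Hc]).
  destruct (HdE _ Hec) as [del Hdel].
  exists del; intros y Hy Hy0.
  assert (Hy' : Rabs y < del).
  { unfold ball in Hy; simpl in Hy; unfold AbsRing_ball, abs, minus, plus, opp in Hy; simpl in Hy.
    rewrite Ropp_0, Rplus_0_r in Hy. exact Hy. }
  specialize (Hdel y Hy0 Hy'). rewrite Rplus_0_l, E0, Rminus_0_r in Hdel.
  replace (E y / (c * y) - 1) with ((E y / y - c) / c) by (field; auto).
  rewrite Rabs_div by exact Hc. apply Rlt_div_l; [apply Rabs_pos_lt, Hc | exact Hdel].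
Qed.

Theorem corollary1p11
  (tau : R -> R) (beta delta : R -> C) (r : R -> R -> C) (lam : R -> R -> C)
  (Hbeta : C1c_near beta 0) (Hdelta : C1c_near delta 0)
  (Hr : C1c_2d_near r 0 0)
  (Hlam : exists eta : R, 0 < eta /\ forall eps xi, Rabs eps < eta -> Rabs xi < eta ->
            lam eps xi = expansion tau beta delta r eps xi)
  (HB2a : Re (beta 0) = 0)
  (HB2b : Derive (fun e => Re (beta e)) 0 < 0) :
  (exists E : R -> R, curve_spec lam E /\
     (forall E' : R -> R, curve_spec lam E' ->
        exists eta : R, 0 < eta /\ forall xi, Rabs xi < eta -> E' xi = E xi) /\
     (Re (delta 0) <> 0 ->
        is_lim (fun xi => E xi /
                  ((Re (delta 0) / Derive (fun e => Re (beta e)) 0) * xi)) 0 1)).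
Proof.
  destruct Hbeta as [Hb _], Hdelta as [Hd _], Hr as [Hrho _], Hlam as [el [Hel Hlam]].
  destruct (reduced_C1 _ _ _ Hb Hd Hrho) as (eta & Heta & HG).
  destruct (implicit_function _ _ _ eta Heta HG) as (E & a & x0 & Ha & Hx0 & E0 & Hgraph & HdE).
  { unfold reduced; rewrite HB2a; ring. }
  { unfold reduced_de; lra. }
  assert (Spec : curve_spec lam E).
  { split; [| split; [exact E0 |]].
    - exists x0; split; [exact Hx0 |]; intros x Hx; rewrite Rminus_0_r in Hx.
      destruct (HdE x Hx) as [DE CE]; split; [eexists; exact DE | exact CE].
    - apply (zero_locus_graph_of_factor lam _ E el a x0 Hel Ha Hx0 Hgraph).
      intros eps xi Heps Hxi; rewrite Hlam, Re_expansion by assumption; reflexivity. }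
  exists E; split; [exact Spec | split].
  - intros E' Spec'; exact (curve_spec_unique lam E E' Spec Spec').
  - intros Hd0; apply lim_ratio_of_is_derive; [exact E0 | |].
    + apply Rmult_integral_contrapositive; split; [exact Hd0 | apply Rinv_neq_0_compat; lra].
    + destruct (HdE 0) as [D0 _]; [rewrite Rabs_R0; exact Hx0 |].
      rewrite E0, reduced_slope_at_0 in D0 by lra; exact D0.
Qed.
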